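(* Let $t$ be a term of the silly substitution calculus. If $t\to_w^* n$ with $n$ a $\to_w$-normal term, then there is a derivation $\pi\triangleright\Gamma\vdash t:\mathtt{n}$ in the silly multi type system, for some type context $\Gamma$.
   Context: Terms: $t ::= x \mid \lambda x.t \mid t\,u \mid t[x\backslash u]$ ($t[x\backslash u]$ an explicit substitution binding $x$ in $t$; terms up to $\alpha$). Values $v ::= \lambda x.t$. Substitution contexts $S ::= \langle\cdot\rangle\mid S[x\backslash u]$. Weak contexts $W ::= \langle\cdot\rangle \mid W\,t \mid t\,W \mid t[x\backslash W] \mid W[x\backslash u]$; $W\langle\langle t\rangle\rangle$ is plugging without capture of free variables of $t$. Root rules: $S\langle\lambda x.t\rangle u\mapsto_m S\langle t[x\backslash u]\rangle$; $W\langle\langle x\rangle\rangle[x\backslash u]\mapsto_e W\langle\langle u\rangle\rangle[x\backslash u]$; $t[x\backslash S\langle v\rangle]\mapsto_{gcv} S\langle t\rangle$ if $x\notin\mathrm{fv}(t)$. $\to_w$ is the union of their closures under weak contexts. Silly multi types: linear types $L ::= \mathtt{n} \mid M\multimap L$; multi types $M ::= [L_i]_{i\in I}$ finite multisets ($\mathbf{0}$ empty, $\uplus$ sum). Type contexts $\Gamma$ map variables to multi types with finite support; $\uplus$ pointwise; $\Gamma\setminus\!\!\setminus x$ sets $x$ to $\mathbf{0}$. Judgements $\Gamma\vdash^{(m,e)} t:T$ ($\Gamma\vdash t:T$ when indices are irrelevant). Rules: (ax) $x:[L]\vdash^{(0,1)} x:L$; (many) from $(\Gamma_i\vdash^{(m_i,e_i)}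 t : L_i)_{i\in I}$, $I$ finite possibly empty, infer $\uplus_i\Gamma_i\vdash^{(\sum m_i,\sum e_i)} t : [L_i]_{i\in I}$; ($\mathrm{ax}_\lambda$) $\vdash^{(0,0)}\lambda x.t:\mathtt{n}$; ($\lambda$) from $\Gamma\vdash^{(m,e)}t:L$ infer $\Gamma\setminus\!\!\setminus x\vdash^{(m,e)}\lambda x.t:\Gamma(x)\multimap L$; (@) from $\Gamma\vdash^{(m,e)} t : M\multimap L$ and $\Delta\vdash^{(m',e')} u : M\uplus[\mathtt{n}]$ infer $\Gamma\uplus\Delta\vdash^{(m+m'+1,e+e')} tu : L$; (ES) from $\Gamma\vdash^{(m,e)} t:L$ and $\Delta\vdash^{(m',e')}u:\Gamma(x)\uplus[\mathtt{n}]$ infer $(\Gamma\setminus\!\!\setminus x)\uplus\Delta\vdash^{(m+m',e+e')} t[x\backslash u]:L$. *)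

From Stdlib Require Import List Permutation Arith.
Import ListNotations.

(* ---------- Terms (de Bruijn) ----------
   Es t u  represents  t[x\u]  where x is index 0 in t; u lives outside. *)
Inductive term : Type :=
| Var : nat -> term
| Lam : term -> term
| App : term -> term -> term
| Es  : term -> term -> term.

Fixpoint lift (d c : nat) (t : term) : term :=
  match t with
  | Var k => if k <? c then Var k else Var (k + d)
  | Lam b => Lam (lift d (S c) b)
  | App a b => App (lift d c a) (lift d c b)
  | Es a b => Es (lift d (S c) a) (lift d c b)
  end.

(* lower c t : decrement every free index > c (index c assumed not free) *)
Fixpoint lower (c : nat) (t : term) : term :=
  match t with
  | Var k => if k <=? c then Var k else Var (k - 1)
  | Lam b => Lam (lower (S c) b)
  | App a b => App (lower c a) (lower c b)
  | Es a b => Es (lower (S c) a) (lower c b)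
  end.

Fixpoint occurs (k : nat) (t : term) : bool :=
  match t with
  | Var j => j =? k
  | Lam b => occurs (S k) b
  | App a b => occurs k a || occurs k b
  | Es a b => occurs (S k) a || occurs k b
  end.

Definition is_value (t : term) : Prop := exists b, t = Lam b.

(* Substitution contexts S ::= <.> | S[x\u], as the list of the ES
   arguments, innermost first: plugS [u1;..;un] t = t[x1\u1]...[xn\un]. *)
Definition sctx := list term.
Fixpoint plugS (S : sctx) (t : term) : term :=
  match S with
  | [] => t
  | u :: S' => plugS S' (Es t u)
  end.

Inductive wctx : Type :=
| WHole : wctx
| WAppL : wctx -> term -> wctx
| WAppR : term -> wctx -> wctx
| WEsArg : term -> wctx -> wctx
| WEsBody : wctx -> term -> wctx.

Fixpoint plugW (W : wctx) (t : term) : term :=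
  match W with
  | WHole => t
  | WAppL W' u => App (plugW W' t) u
  | WAppR u W' => App u (plugW W' t)
  | WEsArg u W' => Es u (plugW W' t)
  | WEsBody W' u => Es (plugW W' t) u
  end.

Fixpoint bdepth (W : wctx) : nat :=
  match W with
  | WHole => 0
  | WAppL W' _ => bdepth W'
  | WAppR _ W' => bdepth W'
  | WEsArg _ W' => bdepth W'
  | WEsBody W' _ => S (bdepth W')
  end.

Inductive root : term -> term -> Prop :=
| root_m : forall (S : sctx) (t u : term),
    root (App (plugS S (Lam t)) u)
         (plugS S (Es t (lift (length S) 0 u)))
| root_e : forall (W : wctx) (u : term),
    (* W<<x>>[x\u] -> W<<u>>[x\u] *)
    root (Es (plugW W (Var (bdepth W))) u)
         (Es (plugW W (lift (S (bdepth W)) 0 u)) u)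
| root_gcv : forall (S : sctx) (t v : term),
    is_value v -> occurs 0 t = false ->
    root (Es t (plugS S v))
         (plugS S (lift (length S) 0 (lower 0 t))).

Definition wstep (t t' : term) : Prop :=
  exists (W : wctx) (r r' : term),
    root r r' /\ t = plugW W r /\ t' = plugW W r'.

Inductive wstar : term -> term -> Prop :=
| wstar_refl : forall t, wstar t t
| wstar_step : forall t t' t'', wstep t t' -> wstar t' t'' -> wstar t t''.

Definition wnormal (t : term) : Prop := ~ exists t', wstep t t'.

(* ---------- Silly multi types ----------
   Multi types are finite multisets, represented as lists taken up to
   (deep) permutation, see [teq]/[meq]. *)
Inductive ltype : Type :=
| Tn : ltype
| Arr : list ltype -> ltype -> ltype.

Definition mtype := list ltype.

Inductive teq : ltype -> ltype -> Prop :=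
| teq_n : teq Tn Tn
| teq_arr : forall (M M'' M' : mtype) (L L' : ltype),
    Permutation M M'' -> Forall2 teq M'' M' -> teq L L' ->
    teq (Arr M L) (Arr M' L').

Definition meq (M M' : mtype) : Prop :=
  exists M'', Permutation M M'' /\ Forall2 teq M'' M'.

(* type contexts: index -> multi type (finite support is automatic for
   derivable judgements) *)
Definition tctx := nat -> mtype.
Definition cempty : tctx := fun _ => [].
Definition csum (G D : tctx) : tctx := fun k => G k ++ D k.
Definition csingle (x : nat) (M : mtype) : tctx :=
  fun k => if k =? x then M else [].
(* removal of the binder's variable (index 0) and unshifting *)
Definition cpop (G : tctx) : tctx := fun k => G (S k).

(* Judgements  G |-^(m,e) t : L  and  G |-^(m,e) t : M *)
Inductive lty : tctx -> term -> ltype -> nat -> nat -> Prop :=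
| ty_ax : forall x L, lty (csingle x [L]) (Var x) L 0 1
| ty_axlam : forall t, lty cempty (Lam t) Tn 0 0
| ty_lam : forall G t L m e,
    lty G t L m e -> lty (cpop G) (Lam t) (Arr (G 0) L) m e
| ty_app : forall G D t u M L Mu m e m' e',
    lty G t (Arr M L) m e -> mty D u Mu m' e' -> meq Mu (M ++ [Tn]) ->
    lty (csum G D) (App t u) L (m + m' + 1) (e + e')
| ty_es : forall G D t u L Mu m e m' e',
    lty G t L m e -> mty D u Mu m' e' -> meq Mu (G 0 ++ [Tn]) ->
    lty (csum (cpop G) D) (Es t u) L (m + m') (e + e')
with mty : tctx -> term -> mtype -> nat -> nat -> Prop :=
| ty_many_nil : forall t, mty cempty t [] 0 0
| ty_many_cons : forall G D t L M m e m' e',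
    lty G t L m e -> mty D t M m' e' ->
    mty (csum G D) t (L :: M) (m + m') (e + e').

From Stdlib Require Import List Permutation Arith Lia FunctionalExtensionality.
Import ListNotations.

(* Subject expansion: every root rule can be run backwards on typing derivations,
   keeping the type and the type context up to multiset equality [ceq]. For the
   e-rule this rests on decomposing a derivation for W<<r>> into a multi typing of
   r and a remainder into which any term of the same multi type can be plugged.
   It therefore suffices to type weak normal forms with n. A normal term can be
   given any linear type unless it is an answer S<\x.t>, which gets n: arguments
   of applications and of explicit substitutions get the multi type [n] demanded
   by the silly rules, the head of an application is not an answer (else an
   m-redex) and gets 0 -o L, and the variable of a normal t[x\u] has type 0 in t,
   since every typed variable occurs in weak position and a weak occurrence of x
   would be an e-redex. *)

Scheme lty_mut_ind := Induction for lty Sort Prop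
with mty_mut_ind := Induction for mty Sort Prop.
Combined Scheme lty_mty_ind from lty_mut_ind, mty_mut_ind.

Fixpoint ltype_eq_dec (x y : ltype) {struct x} : {x = y} + {x <> y}.
Proof. decide equality. apply (list_eq_dec ltype_eq_dec). Defined.

Definition cnt (M : mtype) (L : ltype) : nat := count_occ ltype_eq_dec M L.

Lemma cnt_app M M' L : cnt (M ++ M') L = cnt M L + cnt M' L.
Proof. apply count_occ_app. Qed.

Definition ceq (G G' : tctx) : Prop := forall k L, cnt (G k) L = cnt (G' k) L.

Lemma ceq_refl G : ceq G G.
Proof. intros k L; reflexivity. Qed.

Lemma teq_refl : forall L, teq L L.
Proof.
  fix IH 1; intros [|M L].
  - constructor.
  - apply (teq_arr M M); [reflexivity | | apply IH].
    induction M; constructor; auto.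
Qed.

Lemma meq_count_r M M' M'' :
  meq M M' -> (forall L, cnt M' L = cnt M'' L) -> meq M M''.
Proof.
  intros [N [HN HF]] Hc.
  apply (Permutation_count_occ ltype_eq_dec) in Hc.
  destruct (Permutation_Forall2 Hc (Forall2_flip HF)) as [N' [HN' HF']].
  exists N'; split; [now transitivity N | now apply Forall2_flip].
Qed.

Lemma meq_app_r M M' N : meq M M' -> meq (M ++ N) (M' ++ N).
Proof.
  intros [M'' [HP HF]]. exists (M'' ++ N). split.
  - now apply Permutation_app_tail.
  - apply Forall2_app; [assumption |]. induction N; constructor; auto using teq_refl.
Qed.

Lemma meq_Tn : meq [Tn] ([] ++ [Tn]).
Proof. exists [Tn]. split; repeat constructor. Qed.

Ltac nat_cases :=
  repeat match goal with
  | |- context [?a <? ?b] => destruct (Nat.ltb_spec a b)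
  | |- context [?a =? ?b] => destruct (Nat.eqb_spec a b)
  | |- context [?a <=? ?b] => destruct (Nat.leb_spec a b)
  end; try lia; try reflexivity; try (f_equal; lia).

Lemma lift_0 t c : lift 0 c t = t.
Proof. revert c; induction t; intros c; simpl; f_equal; auto; nat_cases. Qed.

Lemma lift_lift t a b c : lift a c (lift b c t) = lift (a + b) c t.
Proof.
  revert c; induction t; intros c; simpl; try (f_equal; auto; fail).
  nat_cases; simpl; nat_cases.
Qed.

Lemma lift_lower t c : occurs c t = false -> lift 1 c (lower c t) = t.
Proof.
  revert c; induction t; intros c Hc; simpl in *.
  - apply Nat.eqb_neq in Hc. nat_cases; simpl; nat_cases.
  - f_equal; auto.
  - apply Bool.orb_false_iff in Hc as [? ?]. f_equal; auto.
  - apply Bool.orb_false_iff in Hc as [? ?]. f_equal; auto.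
Qed.

Definition cshift (n c : nat) (G : tctx) : tctx :=
  fun k => if k <? c then G k else if k <? c + n then [] else G (k - n).

Ltac ctx_ext := apply functional_extensionality; intro;
  unfold cshift, csum, cpop, cempty, csingle; nat_cases.

Lemma cshift_cempty n c : cshift n c cempty = cempty.
Proof. ctx_ext. Qed.

Lemma cshift_csum n c G D : cshift n c (csum G D) = csum (cshift n c G) (cshift n c D).
Proof. ctx_ext. Qed.

Lemma cshift_cpop n c G : cshift n c (cpop G) = cpop (cshift n (S c) G).
Proof. ctx_ext. Qed.

Lemma cshift_csingle n c x M :
  cshift n c (csingle x M) = csingle (if x <? c then x else x + n) M.
Proof. ctx_ext. Qed.

Lemma cshift1_S G k : cshift 1 0 G (S k) = G k.
Proof. unfold cshift; nat_cases. Qed.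

Lemma typing_lift :
  (forall G t L m e, lty G t L m e ->
     forall n c, lty (cshift n c G) (lift n c t) L m e) /\
  (forall G t M m e, mty G t M m e ->
     forall n c, mty (cshift n c G) (lift n c t) M m e).
Proof.
  apply lty_mty_ind; simpl.
  - intros x L n c. rewrite cshift_csingle. destruct (x <? c); constructor.
  - intros t n c. rewrite cshift_cempty. constructor.
  - intros G t L m e _ IH n c. rewrite cshift_cpop.
    apply (ty_lam (cshift n (S c) G)), IH.
  - intros G D t u M L Mu m e m' e' _ IHt _ IHu HM n c.
    rewrite cshift_csum. econstructor; eauto.
  - intros G D t u L Mu m e m' e' _ IHt _ IHu HM n c.
    rewrite cshift_csum, cshift_cpop. econstructor; eauto.
  - intros t n c. rewrite cshift_cempty. constructor.
  - intros G D t L M m e m' e' _ IHh _ IHt n c.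
    rewrite cshift_csum. constructor; auto.
Qed.

Lemma lty_lift n c G t L m e :
  lty G t L m e -> lty (cshift n c G) (lift n c t) L m e.
Proof. intros H; now apply typing_lift. Qed.

Lemma mty_lift n c G t M m e :
  mty G t M m e -> mty (cshift n c G) (lift n c t) M m e.
Proof. intros H; now apply typing_lift. Qed.

Lemma typing_unlift :
  (forall K t L m e, lty K t L m e -> forall n c u, t = lift n c u ->
     exists G, K = cshift n c G /\ lty G u L m e) /\
  (forall K t M m e, mty K t M m e -> forall n c u, t = lift n c u ->
     exists G, K = cshift n c G /\ mty G u M m e).
Proof.
  apply lty_mty_ind.
  - intros x L n c [j| | |] Hw; simpl in Hw; try discriminate.
    exists (csingle j [L]). rewrite cshift_csingle.
    destruct (j <? c); injection Hw as ->; split; auto; constructor.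
  - intros t n c [j| | |] Hw; simpl in Hw; try discriminate; [destruct (j <? c); discriminate |].
    exists cempty. rewrite cshift_cempty. split; auto; constructor.
  - intros G t L m e _ IH n c [j| | |] Hw; simpl in Hw; try discriminate;
      [destruct (j <? c); discriminate |].
    injection Hw as Hw. destruct (IH n (S c) _ Hw) as (G' & -> & HG).
    exists (cpop G'). rewrite cshift_cpop. split; auto. apply (ty_lam G'); auto.
  - intros G D t u M L Mu m e m' e' _ IHt _ IHu HM n c [j| | |] Hw; simpl in Hw;
      try discriminate; [destruct (j <? c); discriminate |].
    injection Hw as Ht Hu.
    destruct (IHt n c _ Ht) as (G' & -> & HG).
    destruct (IHu n c _ Hu) as (D' & -> & HD).
    exists (csum G' D'). rewrite cshift_csum. split; auto. econstructor; eauto.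
  - intros G D t u L Mu m e m' e' _ IHt _ IHu HM n c [j| | |] Hw; simpl in Hw;
      try discriminate; [destruct (j <? c); discriminate |].
    injection Hw as Ht Hu.
    destruct (IHt n (S c) _ Ht) as (G' & -> & HG).
    destruct (IHu n c _ Hu) as (D' & -> & HD).
    exists (csum (cpop G') D'). rewrite cshift_csum, cshift_cpop. split; auto.
    econstructor; eauto.
  - intros t n c w Hw. exists cempty. rewrite cshift_cempty. split; auto; constructor.
  - intros G D t L M m e m' e' _ IHh _ IHt n c w Hw.
    destruct (IHh n c w Hw) as (G' & -> & HG).
    destruct (IHt n c w Hw) as (D' & -> & HD).
    exists (csum G' D'). rewrite cshift_csum. split; auto. constructor; auto.
Qed.

Lemma lty_unlift n c K u L m e :
  lty K (lift n c u) L m e -> exists G, K = cshift n c G /\ lty G u L m e.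
Proof. intros H; eapply typing_unlift; eauto. Qed.

Lemma mty_unlift n c K u M m e :
  mty K (lift n c u) M m e -> exists G, K = cshift n c G /\ mty G u M m e.
Proof. intros H; eapply typing_unlift; eauto. Qed.

(* Context bookkeeping below only ever involves the indices [k], [0] and [S k]. *)
Ltac ceq_at k L :=
  repeat match goal with
  | H : ceq _ _ |- _ =>
      let Hk := fresh "Hk" in let H0 := fresh "H0" in let HS := fresh "HS" in
      pose proof (H k L) as Hk; pose proof (H 0 L) as H0; pose proof (H (S k) L) as HS;
      clear H
  end.

Ltac count_arith :=
  unfold csum, cpop, cempty, csingle in *; cbv beta in *; rewrite ?cshift1_S in *;
  simpl in *; rewrite ?cnt_app in *; simpl in *; lia.

Ltac ceq_arith :=
  let k := fresh "k" in let L := fresh "L" in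
  intros k L; ceq_at k L; count_arith.

Lemma csum_assoc G D E : csum (csum G D) E = csum G (csum D E).
Proof. apply functional_extensionality; intro; symmetry; apply app_assoc. Qed.

Lemma mty_app G1 G2 t M1 M2 m1 e1 m2 e2 :
  mty G1 t M1 m1 e1 -> mty G2 t M2 m2 e2 -> exists m e, mty (csum G1 G2) t (M1 ++ M2) m e.
Proof.
  intros H1 H2; induction H1 as [|G D u L M m e m' e' HL _ IH]; cbn [app].
  - eauto.
  - destruct (IH H2) as (m3 & e3 & H3).
    rewrite csum_assoc. do 2 eexists. constructor; eauto.
Qed.

Lemma mty_app_inv G t M1 M2 m e : mty G t (M1 ++ M2) m e ->
  exists G1 G2 m1 e1 m2 e2,
    mty G1 t M1 m1 e1 /\ mty G2 t M2 m2 e2 /\ G = csum G1 G2.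
Proof.
  revert G m e; induction M1 as [|L M1 IH]; intros G m e H; simpl in H.
  - exists cempty, G. do 4 eexists. split; [constructor | eauto].
  - inversion H as [|GL G' ? ? ? ? ? ? ? HL HM]; subst.
    destruct (IH _ _ _ HM) as (G1 & G2 & m1 & e1 & m2 & e2 & H1 & H2 & ->).
    exists (csum GL G1), G2. do 4 eexists. split; [constructor; eauto |].
    split; [eauto | symmetry; apply csum_assoc].
Qed.

Lemma mty_var x M : exists m e, mty (csingle x M) (Var x) M m e.
Proof.
  induction M as [|L M [m [e IH]]].
  - replace (csingle x []) with cempty by ctx_ext. do 2 eexists; constructor.
  - replace (csingle x (L :: M)) with (csum (csingle x [L]) (csingle x M)) by ctx_ext.
    do 2 eexists; constructor; [constructor | eauto].
Qed.

(** * Decomposing a typing along a weak context *)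

Definition decomposable {T : Type} (J : tctx -> term -> T -> nat -> nat -> Prop)
    (F : term -> term) : Prop :=
  forall r G A m e, J G (F r) A m e ->
  exists Mr Gr Gc mr er, mty Gr r Mr mr er /\ ceq G (csum Gc Gr) /\
    forall r' Gr' m' e', mty Gr' r' Mr m' e' ->
      exists G' m'' e'', J G' (F r') A m'' e'' /\ ceq G' (csum Gc Gr').

Lemma decomposable_mty F : decomposable lty F -> decomposable mty F.
Proof.
  intros HF r G M m e H. remember (F r) as t eqn:Et.
  induction H as [t|G D t L M m e m' e' HL HM IH]; subst.
  - exists [], cempty, cempty, 0, 0. split; [constructor | split; [ceq_arith |]].
    intros r' Gr' mr' er' H'. inversion H'; subst.
    exists cempty, 0, 0. split; [constructor | ceq_arith].
  - destruct (HF _ _ _ _ _ HL) as (Mr1 & Gr1 & Gc1 & mr1 & er1 & H1 & E1 & R1).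
    destruct IH as (Mr2 & Gr2 & Gc2 & mr2 & er2 & H2 & E2 & R2); auto.
    destruct (mty_app _ _ _ _ _ _ _ _ _ H1 H2) as (mr & er & H12).
    exists (Mr1 ++ Mr2), (csum Gr1 Gr2), (csum Gc1 Gc2), mr, er.
    split; [exact H12 | split; [ceq_arith |]].
    intros r' Gr' mr' er' H'.
    destruct (mty_app_inv _ _ _ _ _ _ H') as (Gr1' & Gr2' & ? & ? & ? & ? & H1' & H2' & ->).
    destruct (R1 _ _ _ _ H1') as (G1' & ? & ? & HG1 & E1').
    destruct (R2 _ _ _ _ H2') as (G2' & ? & ? & HG2 & E2').
    exists (csum G1' G2'). do 2 eexists. split; [constructor; eauto | ceq_arith].
Qed.

(* [plugW W (lift (bdepth W) 0 r)] is the capture-avoiding plugging W<<r>>. *)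
Lemma decomposable_plugW W : decomposable lty (fun r => plugW W (lift (bdepth W) 0 r)).
Proof.
  induction W as [|W IH t|t W IH|t W IH|W IH u]; intros r G L m e H; simpl in H |- *.
  - rewrite lift_0 in H.
    exists [L], (csum G cempty), cempty. do 2 eexists.
    split; [econstructor; eauto; constructor | split; [ceq_arith |]].
    intros r' Gr' mr' er' H'. rewrite lift_0.
    inversion H' as [|G0 D0 ? ? ? ? ? ? ? H0 Hnil]; subst. inversion Hnil; subst.
    exists G0. do 2 eexists. split; [eauto | ceq_arith].
  - inversion H as [| | |G1 D ? ? M ? Mu ? ? ? ? H1 HD HM|]; subst.
    destruct (IH _ _ _ _ _ H1) as (Mr & Gr & Gc & mr & er & Hr & E & R).
    exists Mr, Gr, (csum Gc D), mr, er. split; [exact Hr | split; [ceq_arith |]].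
    intros r' Gr' mr' er' H'. destruct (R _ _ _ _ H') as (G1' & ? & ? & H1' & E').
    exists (csum G1' D). do 2 eexists. split; [econstructor; eauto | ceq_arith].
  - inversion H as [| | |G1 D ? ? M ? Mu ? ? ? ? H1 HD HM|]; subst.
    destruct (decomposable_mty _ IH _ _ _ _ _ HD) as (Mr & Gr & Gc & mr & er & Hr & E & R).
    exists Mr, Gr, (csum G1 Gc), mr, er. split; [exact Hr | split; [ceq_arith |]].
    intros r' Gr' mr' er' H'. destruct (R _ _ _ _ H') as (D' & ? & ? & HD' & E').
    exists (csum G1 D'). do 2 eexists. split; [econstructor; eauto | ceq_arith].
  - inversion H as [| | | |G1 D ? ? ? Mu ? ? ? ? H1 HD HM]; subst.
    destruct (decomposable_mty _ IH _ _ _ _ _ HD) as (Mr & Gr & Gc & mr & er & Hr & E & R).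
    exists Mr, Gr, (csum (cpop G1) Gc), mr, er. split; [exact Hr | split; [ceq_arith |]].
    intros r' Gr' mr' er' H'. destruct (R _ _ _ _ H') as (D' & ? & ? & HD' & E').
    exists (csum (cpop G1) D'). do 2 eexists. split; [econstructor; eauto | ceq_arith].
  - rewrite <- Nat.add_1_r, <- lift_lift in H.
    inversion H as [| | | |G1 D ? ? ? Mu ? ? ? ? H1 HD HM]; subst.
    destruct (IH _ _ _ _ _ H1) as (Mr & Gr1 & Gc & mr & er & Hr & E & R).
    destruct (mty_unlift _ _ _ _ _ _ _ Hr) as (Gr & -> & Hr').
    exists Mr, Gr, (csum (cpop Gc) D), mr, er. split; [exact Hr' | split; [ceq_arith |]].
    intros r' Gr' mr' er' H'. rewrite <- Nat.add_1_r, <- lift_lift.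
    destruct (R _ _ _ _ (mty_lift 1 0 _ _ _ _ _ H')) as (G1' & ? & ? & H1' & E').
    exists (csum (cpop G1') D). do 2 eexists. split; [| ceq_arith].
    econstructor; eauto. eapply meq_count_r; [eassumption |].
    intros L'; ceq_at 0 L'; count_arith.
Qed.

(** * Subject expansion *)

Definition expands (t t' : term) : Prop :=
  forall G L m e, lty G t' L m e -> exists G0 m0 e0, lty G0 t L m0 e0 /\ ceq G0 G.

Lemma expands_refl t : expands t t.
Proof. intros G L m e H. exists G, m, e. split; [exact H | apply ceq_refl]. Qed.

Lemma expands_trans t t' t'' : expands t t' -> expands t' t'' -> expands t t''.
Proof.
  intros H1 H2 G L m e H.
  destruct (H2 _ _ _ _ H) as (G1 & m1 & e1 & H' & E1).
  destruct (H1 _ _ _ _ H') as (G0 & m0 & e0 & H0 & E0).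
  exists G0, m0, e0. split; [exact H0 | ceq_arith].
Qed.

Lemma expands_mty t t' : expands t t' ->
  forall G M m e, mty G t' M m e -> exists G0 m0 e0, mty G0 t M m0 e0 /\ ceq G0 G.
Proof.
  intros Ht G M m e H.
  induction H as [|G D u L M m e m' e' HL _ IH].
  - exists cempty, 0, 0. split; [constructor | apply ceq_refl].
  - destruct (Ht _ _ _ _ HL) as (G0 & m0 & e0 & H0 & E0).

    destruct (IH Ht) as (D0 & m1 & e1 & H1 & E1).
    exists (csum G0 D0). do 2 eexists. split; [constructor; eauto | ceq_arith].
Qed.

Lemma plugS_snoc S s t : plugS (S ++ [s]) t = Es (plugS S t) s.
Proof. revert t; induction S; intros; simpl; auto. Qed.

Lemma expands_m S t u :
  expands (App (plugS S (Lam t)) u) (plugS S (Es t (lift (length S) 0 u))).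
Proof.
  revert u; induction S as [|s S IH] using rev_ind; intros u G L m e H.
  - simpl in H. rewrite lift_0 in H.
    inversion H as [| | | |G1 D ? ? ? Mu ? ? ? ? H1 HD HM]; subst.
    exists (csum (cpop G1) D). do 2 eexists.
    split; [econstructor; [constructor |..]; eauto | apply ceq_refl].
  - rewrite plugS_snoc, length_app, Nat.add_1_r in H. simpl in H.
    rewrite <- Nat.add_1_r, <- lift_lift in H.
    inversion H as [| | | |G1 D ? ? ? Mu ? ? ? ? H1 HD HM]; subst.
    destruct (IH _ _ _ _ _ H1) as (G1' & ? & ? & H1' & E1).
    inversion H1' as [| | |Gf Ku ? ? M ? Mu' ? ? ? ? Hf Hu HMu|]; subst.
    destruct (mty_unlift _ _ _ _ _ _ _ Hu) as (Gu & -> & Hu').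
    rewrite plugS_snoc.
    exists (csum (csum (cpop Gf) D) Gu). do 2 eexists. split; [| ceq_arith].
    econstructor; [econstructor; [exact Hf | exact HD |] | exact Hu' | exact HMu].
    eapply meq_count_r; [exact HM |]. intros L'; ceq_at 0 L'; count_arith.
Qed.

Lemma lty_plugS_lift S b x G L m e :
  lty G (plugS S (lift (length S) 0 x)) L m e ->
  exists Gx Gs mx ex ms es,
    lty Gx x L mx ex /\ lty Gs (plugS S (Lam b)) Tn ms es /\ ceq G (csum Gx Gs).
Proof.
  revert x G L m e; induction S as [|s S IH] using rev_ind; intros x G L m e H.
  - simpl in H. rewrite lift_0 in H.
    exists G, cempty. do 4 eexists. split; [exact H | split; [constructor | ceq_arith]].
  - rewrite plugS_snoc, length_app, Nat.add_1_r in H. simpl in H.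
    rewrite <- Nat.add_1_r, <- lift_lift in H.
    inversion H as [| | | |G1 D ? ? ? Mu ? ? ? ? H1 HD HM]; subst.
    destruct (IH _ _ _ _ _ H1) as (Gx1 & Gs & ? & ? & ? & ? & Hx & Hs & E).
    destruct (lty_unlift _ _ _ _ _ _ _ Hx) as (Gx & -> & Hx').
    exists Gx, (csum (cpop Gs) D). do 4 eexists.
    split; [exact Hx' | split; [| ceq_arith]].
    rewrite plugS_snoc. econstructor; [exact Hs | exact HD |].
    eapply meq_count_r; [exact HM |]. intros L'; ceq_at 0 L'; count_arith.
Qed.

Lemma expands_gcv S t v : is_value v -> occurs 0 t = false ->
  expands (Es t (plugS S v)) (plugS S (lift (length S) 0 (lower 0 t))).
Proof.
  intros [b ->] Ht G L m e H.
  destruct (lty_plugS_lift S b _ _ _ _ _ H) as (Gt & Gs & ? & ? & ? & ? & H1 & Hs & E).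
  apply (lty_lift 1 0) in H1. rewrite lift_lower in H1 by exact Ht.
  exists (csum (cpop (cshift 1 0 Gt)) (csum Gs cempty)). do 2 eexists.
  split; [| ceq_arith].
  econstructor; [exact H1 | econstructor; [exact Hs | constructor] | exact meq_Tn].
Qed.

Lemma expands_e W u :
  expands (Es (plugW W (Var (bdepth W))) u) (Es (plugW W (lift (S (bdepth W)) 0 u)) u).
Proof.
  intros G L m e H.
  inversion H as [| | | |G1 D ? ? ? Mu ? ? ? ? H1 HD HM]; subst.
  rewrite <- Nat.add_1_r, <- lift_lift in H1.
  destruct (decomposable_plugW W _ _ _ _ _ H1) as (Mr & Gr & Gc & ? & ? & Hr & E & R).
  destruct (mty_unlift _ _ _ _ _ _ _ Hr) as (Gu & -> & Hu).
  destruct (mty_var 0 Mr) as (mv & ev & Hv).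
  destruct (R _ _ _ _ Hv) as (G1' & ? & ? & H1' & E'). simpl in H1'.
  destruct (mty_app _ _ _ _ _ _ _ _ _ HD Hu) as (? & ? & Hmu).
  exists (csum (cpop G1') (csum D Gu)). do 2 eexists. split; [| ceq_arith].
  econstructor; [exact H1' | exact Hmu |].
  eapply meq_count_r; [apply meq_app_r, HM |]. intros L'; ceq_at 0 L'; count_arith.
Qed.

Lemma expands_root r r' : root r r' -> expands r r'.
Proof.
  intros []; [apply expands_m | apply expands_e | apply expands_gcv; assumption].
Qed.

Lemma expands_plugW W t t' : expands t t' -> expands (plugW W t) (plugW W t').
Proof.
  intros Ht; induction W as [|W IH u|u W IH|u W IH|W IH u];
    intros G L m e H; simpl in H |- *.
  - exact (Ht _ _ _ _ H).
  - inversion H as [| | |G1 D ? ? ? ? ? ? ? ? ? H1 HD HM|]; subst.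
    destruct (IH _ _ _ _ H1) as (G1' & ? & ? & H1' & E).
    exists (csum G1' D). do 2 eexists. split; [econstructor; eauto | ceq_arith].
  - inversion H as [| | |G1 D ? ? ? ? ? ? ? ? ? H1 HD HM|]; subst.
    destruct (expands_mty _ _ IH _ _ _ _ HD) as (D' & ? & ? & HD' & E).
    exists (csum G1 D'). do 2 eexists. split; [econstructor; eauto | ceq_arith].
  - inversion H as [| | | |G1 D ? ? ? ? ? ? ? ? H1 HD HM]; subst.
    destruct (expands_mty _ _ IH _ _ _ _ HD) as (D' & ? & ? & HD' & E).
    exists (csum (cpop G1) D'). do 2 eexists. split; [econstructor; eauto | ceq_arith].
  - inversion H as [| | | |G1 D ? ? ? ? ? ? ? ? H1 HD HM]; subst.
    destruct (IH _ _ _ _ H1) as (G1' & ? & ? & H1' & E).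
    exists (csum (cpop G1') D). do 2 eexists. split; [| ceq_arith].
    econstructor; eauto. eapply meq_count_r; [eassumption |].
    intros L'; ceq_at 0 L'; count_arith.
Qed.

Lemma expands_wstar t t' : wstar t t' -> expands t t'.
Proof.
  induction 1 as [t|t t' t'' (W & r & r' & Hr & -> & ->) _ IH].
  - apply expands_refl.
  - eapply expands_trans; [apply expands_plugW, expands_root, Hr | exact IH].
Qed.

(** * Typability of weak normal forms *)

Fixpoint wcomp (W W' : wctx) : wctx :=
  match W with
  | WHole => W'
  | WAppL W0 u => WAppL (wcomp W0 W') u
  | WAppR u W0 => WAppR u (wcomp W0 W')
  | WEsArg u W0 => WEsArg u (wcomp W0 W')
  | WEsBody W0 u => WEsBody (wcomp W0 W') u
  end.

Lemma plugW_wcomp W W' t : plugW (wcomp W W') t = plugW W (plugW W' t).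
Proof. induction W; simpl; f_equal; auto. Qed.

Lemma wnormal_plugW W t : wnormal (plugW W t) -> wnormal t.
Proof.
  intros Hn (t' & W' & r & r' & Hr & -> & ->). apply Hn.
  exists (plugW W (plugW W' r')), (wcomp W W'), r, r'.
  now rewrite !plugW_wcomp.
Qed.

Definition answer (t : term) : Prop := exists S b, t = plugS S (Lam b).

Lemma answer_Es a c : answer a -> answer (Es a c).
Proof. intros (S & b & ->). exists (S ++ [c]), b. now rewrite plugS_snoc. Qed.

Definition occurs_weakly (k : nat) (t : term) : Prop :=
  exists W, t = plugW W (Var (k + bdepth W)).

Lemma wnormal_App_head a c : wnormal (App a c) -> ~ answer a.
Proof.
  intros Hn (S & b & ->). apply Hn.
  exists (plugS S (Es b (lift (length S) 0 c))), WHole. do 2 eexists.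
  split; [apply root_m | split; reflexivity].
Qed.

Lemma wnormal_Es_body a c : wnormal (Es a c) -> ~ occurs_weakly 0 a.
Proof.
  intros Hn [W ->]. apply Hn. eexists. exists WHole. do 2 eexists.
  split; [apply root_e | split; reflexivity].
Qed.

Lemma csum_cempty_r G : csum G cempty = G.
Proof. apply functional_extensionality; intro; apply app_nil_r. Qed.

Lemma csum_nonempty G D k : csum G D k <> [] -> G k <> [] \/ D k <> [].
Proof. unfold csum; destruct (G k); [right | left]; easy. Qed.

Lemma wnormal_typable t : wnormal t -> forall L, (answer t -> L = Tn) ->
  exists G m e, lty G t L m e /\ forall k, G k <> [] -> occurs_weakly k t.
Proof.
  induction t as [x|b|t1 IH1 t2 IH2|t1 IH1 t2 IH2]; intros Hn L HL.
  - exists (csingle x [L]). do 2 eexists. split; [constructor |].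
    intros k Hk. unfold csingle in Hk. destruct (Nat.eqb_spec k x); [subst | easy].
    exists WHole. simpl. now rewrite Nat.add_0_r.
  - rewrite HL by (exists [], b; reflexivity).
    exists cempty. do 2 eexists. split; [constructor | easy].
  - assert (N1 : wnormal t1) by exact (wnormal_plugW (WAppL WHole t2) _ Hn).
    assert (N2 : wnormal t2) by exact (wnormal_plugW (WAppR t1 WHole) _ Hn).
    destruct (IH1 N1 (Arr [] L)) as (G1 & ? & ? & H1 & O1).
    { intros A. exfalso. exact (wnormal_App_head _ _ Hn A). }
    destruct (IH2 N2 Tn) as (G2 & ? & ? & H2 & O2); [easy |].
    exists (csum G1 (csum G2 cempty)). do 2 eexists.
    split; [econstructor; [exact H1 | econstructor; [exact H2 | constructor] | exact meq_Tn] |].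
    intros k Hk. rewrite csum_cempty_r in Hk.
    destruct (csum_nonempty _ _ _ Hk) as [Hk' | Hk'].
    + destruct (O1 k Hk') as [W ->]. now exists (WAppL W t2).
    + destruct (O2 k Hk') as [W ->]. now exists (WAppR t1 W).
  - assert (N1 : wnormal t1) by exact (wnormal_plugW (WEsBody WHole t2) _ Hn).
    assert (N2 : wnormal t2) by exact (wnormal_plugW (WEsArg t1 WHole) _ Hn).
    destruct (IH1 N1 L) as (G1 & ? & ? & H1 & O1); [intros A; apply HL, answer_Es, A |].
    destruct (IH2 N2 Tn) as (G2 & ? & ? & H2 & O2); [easy |].
    assert (Z : G1 0 = []).
    { destruct (G1 0) eqn:E; [reflexivity | exfalso].
      apply (wnormal_Es_body _ _ Hn), O1. now rewrite E. }
    exists (csum (cpop G1) (csum G2 cempty)). do 2 eexists.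
    split; [econstructor; [exact H1 | econstructor; [exact H2 | constructor] |] |].
    { rewrite Z. exact meq_Tn. }
    intros k Hk. rewrite csum_cempty_r in Hk.
    destruct (csum_nonempty _ _ _ Hk) as [Hk' | Hk'].
    + destruct (O1 (S k) Hk') as [W ->]. exists (WEsBody W t2). simpl. do 3 f_equal. lia.
    + destruct (O2 k Hk') as [W ->]. now exists (WEsArg t1 W).
Qed.

Theorem theorem6p5 : forall t nf : term,
  wstar t nf -> wnormal nf ->
  exists (G : tctx) (m e : nat), lty G t Tn m e.
Proof.
  intros t nf Hs Hn.
  destruct (wnormal_typable nf Hn Tn) as (G & m & e & H & _); [easy |].
  destruct (expands_wstar _ _ Hs _ _ _ _ H) as (G0 & m0 & e0 & H0 & _).
  eauto.
Qed.
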